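(* Let $X$ and $Y$ be metric spaces with $X$ complete, and let $Y'\subset Y$ be a subset. Let $f\colon X\to Y$ be continuous and set $X':=f^{-1}(Y')$. Assume that the restriction $f|_{X'}\colon X'\to Y'$ is open and surjective (with $X'$, $Y'$ carrying the induced metrics). Then there exists a subset $X_0\subset X'$ which is relatively closed in $X'$, such that $f|_{X_0}\colon X_0\to Y'$ is surjective and $\mathrm{dens}(X_0)=\mathrm{dens}(Y')$.
   Context: For a metric space $W$, $\mathrm{dens}(W)$ denotes the smallest cardinality of a dense subset of $W$. A map is open if it maps open sets of its domain to open sets of its target. *)

From Stdlib Require Import Reals.
Open Scope R_scope.

Definition subset {T : Type} (A B : T -> Prop) : Prop := forall x, A x -> B x.

Definition image {T U : Type} (f : T -> U) (A : T -> Prop) : U -> Prop :=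
  fun y => exists x, A x /\ f x = y.

Definition preimage {T U : Type} (f : T -> U) (B : U -> Prop) : T -> Prop :=
  fun x => B (f x).

Definition cauchy_seq (M : Metric_Space) (u : nat -> Base M) : Prop :=
  forall eps, eps > 0 -> exists N, forall m n, (N <= m)%nat -> (N <= n)%nat ->
    dist M (u m) (u n) < eps.

Definition converges_to (M : Metric_Space) (u : nat -> Base M) (l : Base M) : Prop :=
  forall eps, eps > 0 -> exists N, forall n, (N <= n)%nat -> dist M (u n) l < eps.

Definition complete (M : Metric_Space) : Prop :=
  forall u, cauchy_seq M u -> exists l, converges_to M u l.

Definition continuous_map (X Y : Metric_Space) (f : Base X -> Base Y) : Prop :=
  forall x eps, eps > 0 -> exists delta, delta > 0 /\
    forall x', dist X x x' < delta -> dist Y (f x) (f x') < eps.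

Definition rel_open (M : Metric_Space) (S U : Base M -> Prop) : Prop :=
  subset U S /\
  forall x, U x -> exists eps, eps > 0 /\
    forall y, S y -> dist M x y < eps -> U y.

Definition rel_closed (M : Metric_Space) (S C : Base M -> Prop) : Prop :=
  subset C S /\
  forall x, S x -> (forall eps, eps > 0 -> exists z, C z /\ dist M x z < eps) -> C x.

Definition open_restriction (X Y : Metric_Space) (f : Base X -> Base Y)
  (S : Base X -> Prop) (T : Base Y -> Prop) : Prop :=
  forall U, rel_open X S U -> rel_open Y T (image f U).

Definition surj_restriction {A B : Type} (f : A -> B) (S : A -> Prop) (T : B -> Prop) : Prop :=
  forall y, T y -> exists x, S x /\ f x = y.

Definition dense_in (M : Metric_Space) (W D : Base M -> Prop) : Prop :=
  subset D W /\
  forall w, W w -> forall eps, eps > 0 -> exists d, D d /\ dist M w d < eps.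

Definition card_le {T U : Type} (A : T -> Prop) (B : U -> Prop) : Prop :=
  exists g : {x | A x} -> {y | B y}, forall a b, g a = g b -> a = b.

(* dens(W2) <= dens(W1): every dense subset of W1 dominates in cardinality
   some dense subset of W2. *)
Definition dens_le (M1 M2 : Metric_Space) (W1 : Base M1 -> Prop) (W2 : Base M2 -> Prop) : Prop :=
  forall D1, dense_in M1 W1 D1 -> exists D2, dense_in M2 W2 D2 /\ card_le D2 D1.

Definition dens_eq (M1 M2 : Metric_Space) (W1 : Base M1 -> Prop) (W2 : Base M2 -> Prop) : Prop :=
  dens_le M1 M2 W1 W2 /\ dens_le M2 M1 W2 W1.

From Stdlib Require Import Reals Lra Lia List Classical ClassicalEpsilon ProofIrrelevance FinFun Cantor.
From mathcomp Require classical_sets boolp.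

(* If every point of [Y'] is isolated in [Y'], one chosen preimage per point will do: this
   set is closed in [X'] because [f] is continuous and the points of [Y'] are isolated, and
   [f] maps it injectively into every dense subset of [Y'].
   Otherwise every dense subset of [Y'] is infinite.  Fix a dense [D] in [Y'] that is a
   countable union of maximal separated sets, so that [|D| <= |nat * D1|] for every dense
   [D1].  Openness of [f] on [X'] lets us grow a tree of points of [X'], each child within
   [2^-n] of its parent and chosen through an index in [D * nat]; following the tree towards
   any [y] in [Y'] gives a Cauchy sequence whose limit is mapped to [y].  The closure [X0] of
   the tree in [X'] thus maps onto [Y'], and its dense subset, the tree, is indexed by finite
   lists over [D * nat], a set of size [|D1|] by Hessenberg's theorem [|T * T| = |T|]. *)

Definition chain {A : Type} (F : (A -> Prop) -> Prop) : Prop :=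
  forall X Y, F X -> F Y -> subset X Y \/ subset Y X.

Definition union_of {A : Type} (F : (A -> Prop) -> Prop) (a : A) : Prop :=
  exists X, F X /\ X a.

Lemma chain_union2 {A : Type} (F : (A -> Prop) -> Prop) a b :
  chain F -> union_of F a -> union_of F b -> exists X, F X /\ X a /\ X b.
Proof.
intros Fchain [X [FX Xa]] [Y [FY Yb]].
destruct (Fchain X Y FX FY) as [XY|YX].
- exists Y. split; [exact FY|split; [exact (XY a Xa)|exact Yb]].
- exists X. split; [exact FX|split; [exact Xa|exact (YX b Yb)]].
Qed.

Lemma zorn_subset {A : Type} (P : (A -> Prop) -> Prop) (M0 : A -> Prop) :
  P M0 ->
  (forall F, (forall X, F X -> P X) -> chain F -> (exists X, F X) -> P (union_of F)) ->
  exists M, P M /\ forall N, P N -> subset M N -> subset N M.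
Proof.
intros PM0 Punion.
pose (R := fun X Y : {X | P X} => boolp.asbool (subset (proj1_sig X) (proj1_sig Y))).
destruct (@classical_sets.ZL_preorder _ (exist _ M0 PM0) R) as [[M PM] Mmax].
- intros X. apply boolp.asboolT. intros a Xa. exact Xa.
- intros X Y Z XY YZ. apply boolp.asboolT. intros a Xa.
  exact (boolp.asboolW YZ a (boolp.asboolW XY a Xa)).
- intros C Ctot. destruct (classic (exists X, C X)) as [[X CX]|noC].
  + pose (F := fun Y => exists PY, C (exist _ Y PY)).
    assert (PU : P (union_of F)).
    { apply Punion.
      - intros Y [PY _]. exact PY.
      - intros Y Z [PY CY] [PZ CZ].
        destruct (Ctot _ _ CY CZ) as [H|H]; [left|right]; exact (boolp.asboolW H).
      - exists (proj1_sig X), (proj2_sig X). destruct X. exact CX. }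
    exists (exist _ _ PU). intros [Y PY] CY. apply boolp.asboolT. intros a Ya.
    exists Y. split; [exists PY; exact CY|exact Ya].
  + exists (exist _ M0 PM0). intros X CX. exfalso. apply noC. exists X. exact CX.
- exists M. split; [exact PM|]. intros N PN MN.
  exact (boolp.asboolW (Mmax (exist _ N PN) (boolp.asboolT MN))).
Qed.

Lemma choice_on {A B : Type} (D : A -> Prop) (R : A -> B -> Prop) (b0 : B) :
  (forall a, D a -> exists b, R a b) -> exists g : A -> B, forall a, D a -> R a (g a).
Proof.
intros HR. apply (choice (fun a b => D a -> R a b)). intros a.
destruct (classic (D a)) as [Da|nDa].
- destruct (HR a Da) as [b Rb]. exists b. intros _. exact Rb.
- exists b0. intros Da. contradiction.
Qed.

Lemma dependent_choice {A : Type} (P : nat -> A -> Prop) (R : nat -> A -> A -> Prop) :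
  (exists a, P 0%nat a) -> (forall n a, P n a -> exists b, P (S n) b /\ R n a b) ->
  exists s : nat -> A, forall n, P n (s n) /\ R n (s n) (s (S n)).
Proof.
intros [a0 Pa0] step.
destruct (choice_on (fun p => P (fst p) (snd p))
  (fun p b => P (S (fst p)) b /\ R (fst p) (snd p) b) a0) as [next Hnext].
{ intros [n a] Pa. exact (step n a Pa). }
pose (s := fix s n := match n with O => a0 | S n => next (n, s n) end).
assert (Ps : forall n, P n (s n)).
{ induction n as [|n IH]; [exact Pa0|exact (proj1 (Hnext (n, s n) IH))]. }
exists s. intros n. split; [apply Ps|exact (proj2 (Hnext (n, s n) (Ps n)))].
Qed.

Lemma proj1_sig_inj {A : Type} (P : A -> Prop) (u v : {a | P a}) :
  proj1_sig u = proj1_sig v -> u = v.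
Proof. apply eq_sig_hprop. intros. apply proof_irrelevance. Qed.

Lemma map_inj_Forall {A B : Type} (Q : A -> Prop) (c : A -> B) :
  (forall a b, Q a -> Q b -> c a = c b -> a = b) ->
  forall l l', Forall Q l -> Forall Q l' -> map c l = map c l' -> l = l'.
Proof.
intros c_inj l. induction l as [|a l IH]; intros [|b l'] Ql Ql' E; try discriminate.
- reflexivity.
- inversion Ql; inversion Ql'; subst. injection E as Eab El.
  f_equal; [apply c_inj|apply IH]; assumption.
Qed.

(** * Cardinal arithmetic *)

Definition injects_into {T : Type} (A B : T -> Prop) : Prop :=
  exists g : T -> T, (forall a, A a -> B (g a)) /\
    (forall a a', A a -> A a' -> g a = g a' -> a = a').

Definition partial_injection {T : Type} (A B : T -> Prop) (G : T * T -> Prop) : Prop :=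
  (forall a b, G (a, b) -> A a /\ B b) /\
  (forall a b b', G (a, b) -> G (a, b') -> b = b') /\
  (forall a a' b, G (a, b) -> G (a', b) -> a = a').

Lemma partial_injection_flip {T : Type} (A B : T -> Prop) G :
  partial_injection A B G -> partial_injection B A (fun p => G (snd p, fst p)).
Proof.
intros [GAB [Gfun Ginj]]. split; [|split]; simpl.
- intros b a Gab. destruct (GAB a b Gab). split; assumption.
- intros b a a' H H'. exact (Ginj a a' b H H').
- intros b b' a H H'. exact (Gfun a b b' H H').
Qed.

Lemma injects_into_of_partial_injection {T : Type} (A B : T -> Prop) G :
  partial_injection A B G -> (forall a, A a -> exists b, G (a, b)) -> injects_into A B.
Proof.
intros [GAB [_ Ginj]] Gtotal.
destruct (choice (fun a b => A a -> G (a, b))) as [g Hg].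
{ intros a. destruct (classic (A a)) as [Aa|nAa].
  - destruct (Gtotal a Aa) as [b Gab]. exists b. intros _. exact Gab.
  - exists a. intros Aa. contradiction. }
exists g. split.
- intros a Aa. exact (proj2 (GAB _ _ (Hg a Aa))).
- intros a a' Aa Aa' E. apply (Ginj a a' (g a)); [|rewrite E]; apply Hg; assumption.
Qed.

Lemma injects_into_total {T : Type} (A B : T -> Prop) : injects_into A B \/ injects_into B A.
Proof.
destruct (zorn_subset (partial_injection A B) (fun _ => False)) as [G [HG Gmax]].
- split; [|split]; intros; contradiction.
- intros F FP Fchain _. split; [|split].
  + intros a b [X [FX Xab]]. exact (proj1 (FP X FX) a b Xab).
  + intros a b b' Hb Hb'. destruct (chain_union2 F _ _ Fchain Hb Hb') as [X [FX [Xb Xb']]].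
    exact (proj1 (proj2 (FP X FX)) a b b' Xb Xb').
  + intros a a' b Ha Ha'. destruct (chain_union2 F _ _ Fchain Ha Ha') as [X [FX [Xa Xa']]].
    exact (proj2 (proj2 (FP X FX)) a a' b Xa Xa').
- destruct (classic (forall a, A a -> exists b, G (a, b))) as [HA|HA].
  { left. exact (injects_into_of_partial_injection A B G HG HA). }
  destruct (classic (forall b, B b -> exists a, G (a, b))) as [HB|HB].
  { right. exact (injects_into_of_partial_injection B A _ (partial_injection_flip A B G HG) HB). }
  exfalso.
  apply not_all_ex_not in HA as [a0 HA]. apply imply_to_and in HA as [Aa0 Na0].
  apply not_all_ex_not in HB as [b0 HB]. apply imply_to_and in HB as [Bb0 Nb0].
  destruct HG as [GAB [Gfun Ginj]].
  assert (HG' : partial_injection A B (fun p => G p \/ p = (a0, b0))).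
  { split; [|split].
    - intros a b [Gab|E]; [exact (GAB a b Gab)|injection E as -> ->; split; assumption].
    - intros a b b' [H|E] [H'|E'].
      + exact (Gfun a b b' H H').
      + injection E' as -> ->. exfalso. apply Na0. exists b. exact H.
      + injection E as -> ->. exfalso. apply Na0. exists b'. exact H'.
      + injection E as _ ->. injection E' as _ ->. reflexivity.
    - intros a a' b [H|E] [H'|E'].
      + exact (Ginj a a' b H H').
      + injection E' as -> ->. exfalso. apply Nb0. exists a. exact H.
      + injection E as -> ->. exfalso. apply Nb0. exists a'. exact H'.
      + injection E as -> _. injection E' as -> _. reflexivity. }
  apply Na0. exists b0. apply (Gmax _ HG' (fun p Gp => or_introl Gp)). right. reflexivity.
Qed.
Section Hessenberg.
Variables (T : Type) (i : nat -> T).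
Hypothesis i_inj : Injective i.

(* [G (a, b, c)] encodes [phi (a, b) = c] for an injection [phi] of [S * S] into [S],
   where [S] is [carrier G]; graphs make unions of chains immediate. *)
Definition carrier (G : T * T * T -> Prop) (a : T) : Prop := exists c, G (a, a, c).

Record pairing (G : T * T * T -> Prop) : Prop := {
  pairing_dom : forall a b c, G (a, b, c) -> carrier G a /\ carrier G b /\ carrier G c;
  pairing_total : forall a b, carrier G a -> carrier G b -> exists c, G (a, b, c);
  pairing_fun : forall a b c c', G (a, b, c) -> G (a, b, c') -> c = c';
  pairing_inj : forall a b a' b' c, G (a, b, c) -> G (a', b', c) -> a = a' /\ b = b';
  pairing_nat : forall n, carrier G (i n) }.

Lemma cantor_pairing : pairing (fun t => exists m n, t = (i m, i n, i (to_nat (m, n)))).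
Proof.
set (G := fun t => exists m n, t = (i m, i n, i (to_nat (m, n)))).
assert (carrier_i : forall n, carrier G (i n)).
{ intros n. exists (i (to_nat (n, n))), n, n. reflexivity. }
split.
- intros a b c [m [n E]]. injection E as -> -> ->. split; [|split]; apply carrier_i.
- intros a b [c [m [m' E]]] [c' [n [n' E']]]. injection E as -> _ _. injection E' as -> _ _.
  exists (i (to_nat (m, n))), m, n. reflexivity.
- intros a b c c' [m [n E]] [m' [n' E']]. injection E as -> -> ->. injection E' as Em En ->.
  apply i_inj in Em as ->. apply i_inj in En as ->. reflexivity.
- intros a b a' b' c [m [n E]] [m' [n' E']].
  assert (Ec : i (to_nat (m, n)) = i (to_nat (m', n'))) by congruence.
  injection (to_nat_inj _ _ (i_inj _ _ Ec)) as -> ->. split; congruence.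
- exact carrier_i.
Qed.

Lemma pairing_union F :
  (forall G, F G -> pairing G) -> chain F -> (exists G, F G) -> pairing (union_of F).
Proof.
intros FP Fchain [G0 FG0].
assert (carrier_union : forall G a, F G -> carrier G a -> carrier (union_of F) a).
{ intros G a FG [c Gc]. exists c, G. split; assumption. }
split.
- intros a b c [G [FG Gabc]]. destruct (pairing_dom G (FP G FG) a b c Gabc) as [Ha [Hb Hc]].
  split; [|split]; eapply carrier_union; eassumption.
- intros a b [c Ha] [c' Hb]. destruct (chain_union2 F _ _ Fchain Ha Hb) as [G [FG [Ga Gb]]].
  destruct (pairing_total G (FP G FG) a b) as [c'' Gab]; [exists c; exact Ga|exists c'; exact Gb|].
  exists c'', G. split; assumption.
- intros a b c c' H H'. destruct (chain_union2 F _ _ Fchain H H') as [G [FG [Gc Gc']]].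
  exact (pairing_fun G (FP G FG) a b c c' Gc Gc').
- intros a b a' b' c H H'. destruct (chain_union2 F _ _ Fchain H H') as [G [FG [Gc Gc']]].
  exact (pairing_inj G (FP G FG) a b a' b' c Gc Gc').
- intros n. exact (carrier_union G0 (i n) FG0 (pairing_nat G0 (FP G0 FG0) n)).
Qed.

Lemma maximal_pairing :
  exists G, pairing G /\ forall G', pairing G' -> subset G G' -> subset G' G.
Proof. exact (zorn_subset pairing _ cantor_pairing pairing_union). Qed.

Lemma pairing_function G : pairing G ->
  exists phi : T * T -> T, forall a b, carrier G a -> carrier G b -> G (a, b, phi (a, b)).
Proof.
intros HG.
destruct (choice_on (fun p => carrier G (fst p) /\ carrier G (snd p))
  (fun p c => G (fst p, snd p, c)) (i 0)) as [phi Hphi].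
- intros [a b] [Ha Hb]. exact (pairing_total G HG a b Ha Hb).
- exists phi. intros a b Ha Hb. exact (Hphi (a, b) (conj Ha Hb)).
Qed.

Section FixedPairing.
Variables (G : T * T * T -> Prop) (phi : T * T -> T).
Hypothesis HG : pairing G.
Hypothesis Hphi : forall a b, carrier G a -> carrier G b -> G (a, b, phi (a, b)).

Lemma phi_carrier a b : carrier G a -> carrier G b -> carrier G (phi (a, b)).
Proof. intros Ha Hb. exact (proj2 (proj2 (pairing_dom G HG _ _ _ (Hphi a b Ha Hb)))). Qed.

Lemma phi_inj a b a' b' : carrier G a -> carrier G b -> carrier G a' -> carrier G b' ->
  phi (a, b) = phi (a', b') -> a = a' /\ b = b'.
Proof.
intros Ha Hb Ha' Hb' E.
apply (pairing_inj G HG a b a' b' (phi (a, b))); [|rewrite E]; apply Hphi; assumption.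
Qed.

Lemma carrier_absorbs (W : T -> Prop) (g : T -> T) :
  (forall x, W x -> carrier G (g x)) -> (forall x y, W x -> W y -> g x = g y -> x = y) ->
  exists e : T -> T, (forall x, carrier G x \/ W x -> carrier G (e x)) /\
    (forall x y, carrier G x \/ W x -> carrier G y \/ W y -> e x = e y -> x = y).
Proof.
intros gW g_inj.
assert (S0 := pairing_nat G HG 0). assert (S1 := pairing_nat G HG 1).
assert (i01 : i 0 <> i 1) by (intros E; apply i_inj in E; discriminate).
exists (fun x => if excluded_middle_informative (carrier G x) then phi (i 0, x)
                 else phi (i 1, g x)).
split.
- intros x Hx. destruct (excluded_middle_informative (carrier G x)) as [Sx|nSx].
  + apply phi_carrier; assumption.
  + apply phi_carrier; [assumption|]. apply gW. destruct Hx; [contradiction|assumption].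
- intros x y Hx Hy.
  destruct (excluded_middle_informative (carrier G x)) as [Sx|nSx];
  destruct (excluded_middle_informative (carrier G y)) as [Sy|nSy]; intros E.
  + exact (proj2 (phi_inj _ _ _ _ S0 Sx S0 Sy E)).
  + destruct Hy as [|Wy]; [contradiction|].
    destruct (phi_inj _ _ _ _ S0 Sx S1 (gW y Wy) E). contradiction.
  + destruct Hx as [|Wx]; [contradiction|].
    destruct (phi_inj _ _ _ _ S1 (gW x Wx) S0 Sy E). congruence.
  + destruct Hx as [|Wx]; [contradiction|]. destruct Hy as [|Wy]; [contradiction|].
    apply g_inj; [assumption|assumption|].
    exact (proj2 (phi_inj _ _ _ _ S1 (gW x Wx) S1 (gW y Wy) E)).
Qed.

Section Extension.
Variables (k e : T -> T).
Hypothesis k_out : forall a, carrier G a -> ~ carrier G (k a).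
Hypothesis k_inj : forall a a', carrier G a -> carrier G a' -> k a = k a' -> a = a'.

Definition enlarged (x : T) : Prop := carrier G x \/ exists a, carrier G a /\ x = k a.

Hypothesis e_into : forall x, enlarged x -> carrier G (e x).
Hypothesis e_inj : forall x y, enlarged x -> enlarged y -> e x = e y -> x = y.

(* New pairs are sent into [k (carrier G)], which is disjoint from [carrier G]. *)
Definition extension (t : T * T * T) : Prop :=
  G t \/ exists a b, enlarged a /\ enlarged b /\ ~ (carrier G a /\ carrier G b) /\
    t = (a, b, k (phi (e a, e b))).

Lemma new_value_carrier a b : enlarged a -> enlarged b -> carrier G (phi (e a, e b)).
Proof. intros Ha Hb. apply phi_carrier; apply e_into; assumption. Qed.

Lemma extension_carrier x : carrier extension x <-> enlarged x.
Proof.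
split.
- intros [c [Gx|[a [b [Ha [_ [_ E]]]]]]].
  + left. exact (proj1 (pairing_dom G HG _ _ _ Gx)).
  + injection E as -> _ _. exact Ha.
- intros Hx. destruct (classic (carrier G x)) as [[c Gx]|nSx].
  + exists c. left. exact Gx.
  + exists (k (phi (e x, e x))). right. exists x, x.
    split; [exact Hx|split; [exact Hx|split; [intros [Sx _]; contradiction|reflexivity]]].
Qed.

Lemma extension_pairing : pairing extension.
Proof.
assert (G_enlarged : forall a b c, G (a, b, c) -> carrier G a /\ carrier G b /\ carrier G c)
  by exact (pairing_dom G HG).
split.
- intros a b c Habc. rewrite !extension_carrier.
  destruct Habc as [Gabc|[a' [b' [Ha [Hb [_ E]]]]]].
  + destruct (G_enlarged a b c Gabc) as [Ha [Hb Hc]]. split; [|split]; left; assumption.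
  + injection E as Ea Eb Ec. subst a b c. split; [exact Ha|split; [exact Hb|]].
    right. exists (phi (e a', e b')). split; [apply new_value_carrier; assumption|reflexivity].
- intros a b Ha Hb. rewrite extension_carrier in Ha, Hb.
  destruct (classic (carrier G a /\ carrier G b)) as [[Sa Sb]|nS].
  + destruct (pairing_total G HG a b Sa Sb) as [c Gc]. exists c. left. exact Gc.
  + eexists. right. exists a, b. repeat split; assumption.
- intros a b c c' [H|[a1 [b1 [_ [_ [nS E]]]]]] [H'|[a2 [b2 [_ [_ [nS' E']]]]]].
  + exact (pairing_fun G HG a b c c' H H').
  + injection E' as -> -> ->. destruct (G_enlarged _ _ _ H) as [Sa [Sb _]]. tauto.
  + injection E as -> -> ->. destruct (G_enlarged _ _ _ H') as [Sa [Sb _]]. tauto.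
  + injection E as -> -> ->. injection E' as <- <- ->. reflexivity.
- intros a b a' b' c [H|[a1 [b1 [Ha1 [Hb1 [_ E]]]]]] [H'|[a2 [b2 [Ha2 [Hb2 [_ E']]]]]].
  + exact (pairing_inj G HG a b a' b' c H H').
  + injection E' as -> -> ->. exfalso.
    apply (k_out _ (new_value_carrier a2 b2 Ha2 Hb2)). exact (proj2 (proj2 (G_enlarged _ _ _ H))).
  + injection E as -> -> ->. exfalso.
    apply (k_out _ (new_value_carrier a1 b1 Ha1 Hb1)). exact (proj2 (proj2 (G_enlarged _ _ _ H'))).
  + injection E as -> -> ->. injection E' as -> -> Ek.
    apply k_inj in Ek; try (apply new_value_carrier; assumption).
    destruct (phi_inj _ _ _ _ (e_into a1 Ha1) (e_into b1 Hb1) (e_into a2 Ha2) (e_into b2 Hb2) Ek)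
      as [Ea Eb].
    split; apply e_inj; assumption.
- intros n. apply extension_carrier. left. exact (pairing_nat G HG n).
Qed.

Lemma extension_proper : ~ subset extension G.
Proof.
intros sub.
assert (Hk : enlarged (k (i 0))) by (right; exists (i 0); split; [exact (pairing_nat G HG 0)|reflexivity]).
apply extension_carrier in Hk as [c Hc].
apply (k_out (i 0) (pairing_nat G HG 0)). exists c. exact (sub _ Hc).
Qed.

End Extension.

Lemma pairing_not_maximal (k : T -> T) :
  (forall a, carrier G a -> ~ carrier G (k a)) ->
  (forall a a', carrier G a -> carrier G a' -> k a = k a' -> a = a') ->
  exists G', pairing G' /\ subset G G' /\ ~ subset G' G.
Proof.
intros k_out k_inj.
set (W := fun x => exists a, carrier G a /\ x = k a).
destruct (choice_on W (fun x a => carrier G a /\ x = k a) (i 0)) as [kinv Hkinv].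
{ intros x Wx. exact Wx. }
destruct (carrier_absorbs W kinv) as [e [e_into e_inj]].
- intros x Wx. exact (proj1 (Hkinv x Wx)).
- intros x y Wx Wy E. rewrite (proj2 (Hkinv x Wx)), (proj2 (Hkinv y Wy)), E. reflexivity.
- exists (extension k e). split; [|split].
  + apply extension_pairing; assumption.
  + intros t Gt. left. exact Gt.
  + apply extension_proper; assumption.
Qed.

End FixedPairing.

Theorem hessenberg : exists h : T * T -> T, Injective h.
Proof.
destruct maximal_pairing as [G [HG Gmax]].
destruct (pairing_function G HG) as [phi Hphi].
destruct (injects_into_total (fun x => ~ carrier G x) (carrier G)) as [[g [gS g_inj]]|[k [k_out k_inj]]].
- destruct (carrier_absorbs G phi HG Hphi _ g gS g_inj) as [e [e_into e_inj]].
  assert (all : forall x, carrier G x \/ ~ carrier G x) by (intros; apply classic).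
  exists (fun p => phi (e (fst p), e (snd p))). intros [x y] [x' y'] E. simpl in E.
  destruct (phi_inj G phi HG Hphi _ _ _ _ (e_into x (all x)) (e_into y (all y))
    (e_into x' (all x')) (e_into y' (all y')) E) as [Ex Ey].
  apply e_inj in Ex; [|apply all|apply all]. apply e_inj in Ey; [|apply all|apply all].
  subst. reflexivity.
- exfalso. destruct (pairing_not_maximal G phi HG Hphi k k_out k_inj) as [G' [HG' [sub nsub]]].
  exact (nsub (Gmax G' HG' sub)).
Qed.

End Hessenberg.

Lemma list_injection {T : Type} (i : nat -> T) : Injective i -> exists enc : list T -> T, Injective enc.
Proof.
intros i_inj. destruct (hessenberg T i i_inj) as [h h_inj].
pose (code := fix code l := match l with nil => i O | x :: l => h (x, code l) end).
exists (fun l => h (i (length l), code l)).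
intros l l' E. apply h_inj in E. injection E as El Ec. apply i_inj in El.
revert l' El Ec. induction l as [|x l IH]; intros [|x' l'] El Ec; try discriminate.
- reflexivity.
- simpl in El, Ec. apply h_inj in Ec. injection Ec as -> Ec. f_equal. apply IH; [congruence|exact Ec].
Qed.

Lemma half_pow_pos n : 0 < (/2)^n.
Proof. apply pow_lt. lra. Qed.

Lemma half_pow_S n : (/2)^(S n) = (/2)^n / 2.
Proof. simpl. field. Qed.

Lemma half_pow_small eps : eps > 0 -> exists n, (/2)^n < eps.
Proof.
intros Heps. destruct (pow_lt_1_zero (/2)) with (y := eps) as [N HN]; [rewrite Rabs_pos_eq; lra|lra|].
exists N. specialize (HN N (le_n N)). rewrite Rabs_pos_eq in HN; [lra|left; apply half_pow_pos].
Qed.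

Lemma half_pow_antitone m n : (m <= n)%nat -> (/2)^n <= (/2)^m.
Proof.
induction 1 as [|n _ IH]; [lra|]. rewrite half_pow_S. pose proof (half_pow_pos n). lra.
Qed.

Section MetricFacts.
Variable M : Metric_Space.

Lemma dist_self (x : Base M) : dist M x x = 0.
Proof. apply dist_refl. reflexivity. Qed.

Lemma dist_pos_neq (x y : Base M) : x <> y -> dist M x y > 0.
Proof.
intros ne. destruct (dist_pos M x y) as [H|H]; [exact H|].
exfalso. apply ne, dist_refl, H.
Qed.

Lemma eq_of_dist_lt (x y : Base M) : (forall eps, eps > 0 -> dist M x y < eps) -> x = y.
Proof.
intros H. apply NNPP. intros ne. specialize (H _ (dist_pos_neq x y ne)). lra.
Qed.

Lemma dense_in_self (A : Base M -> Prop) : dense_in M A A.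
Proof.
split; [intros x Ax; exact Ax|]. intros w Aw eps Heps. exists w.
split; [exact Aw|]. rewrite dist_self. exact Heps.
Qed.

Lemma geometric_cauchy (a : nat -> Base M) :
  (forall n, dist M (a n) (a (S n)) < (/2)^n) -> cauchy_seq M a.
Proof.
intros Ha eps Heps.
assert (tail : forall n k, dist M (a n) (a (n + k)%nat) <= 2 * (/2)^n - 2 * (/2)^(n + k)).
{ intros n k. induction k as [|k IH].
  - rewrite Nat.add_0_r, dist_self. lra.
  - rewrite Nat.add_succ_r, half_pow_S.
    pose proof (dist_tri M (a n) (a (S (n + k))) (a (n + k)%nat)).
    specialize (Ha (n + k)%nat). lra. }
destruct (half_pow_small (eps / 4)) as [N HN]; [lra|].
assert (near : forall p, (N <= p)%nat -> dist M (a N) (a p) < eps / 2).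
{ intros p Hp. replace p with (N + (p - N))%nat by lia.
  pose proof (tail N (p - N)%nat). pose proof (half_pow_pos (N + (p - N))). lra. }
exists N. intros m n Hm Hn.
pose proof (dist_tri M (a m) (a n) (a N)). rewrite (dist_sym M (a m) (a N)) in H.
pose proof (near m Hm). pose proof (near n Hn). lra.
Qed.

Lemma separated_net (W : Base M -> Prop) (r : R) : r > 0 ->
  exists N, subset N W /\ (forall s t, N s -> N t -> s <> t -> dist M s t >= r) /\
    (forall w, W w -> exists s, N s /\ dist M w s < r).
Proof.
intros rpos.
destruct (zorn_subset (fun N => subset N W /\
    forall s t, N s -> N t -> s <> t -> dist M s t >= r) (fun _ => False))
  as [N [[NW Nsep] Nmax]].
- split; [intros x []|intros s t []].
- intros F FP Fchain _. split.
  + intros s [X [FX Xs]]. exact (proj1 (FP X FX) s Xs).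
  + intros s t Hs Ht. destruct (chain_union2 F s t Fchain Hs Ht) as [X [FX [Xs Xt]]].
    exact (proj2 (FP X FX) s t Xs Xt).
- exists N. split; [exact NW|split; [exact Nsep|]].
  intros w Ww. apply NNPP. intros nw.
  assert (far : forall s, N s -> dist M w s >= r).
  { intros s Ns. apply Rnot_lt_ge. intros lt. apply nw. exists s. split; assumption. }
  assert (Nw : N w).
  { apply (Nmax (fun x => N x \/ x = w)); [|intros x Nx; left; exact Nx|right; reflexivity].
    split.
    - intros x [Nx| ->]; [exact (NW x Nx)|exact Ww].
    - intros s t [Ns| ->] [Nt| ->] ne.
      + exact (Nsep s t Ns Nt ne).
      + rewrite dist_sym. exact (far s Ns).
      + exact (far t Nt).
      + contradiction. }
  pose proof (far w Nw) as H. rewrite dist_self in H. lra.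
Qed.

(* The union of maximal [2^-m]-separated subsets of [W]: it is dense, and each of its
   points is determined by its level [m] and any point of a given dense set closer than
   [2^-m / 2], so it is no larger than [nat * D1] for every dense [D1]. *)
Lemma sigma_discrete_dense (W : Base M -> Prop) :
  exists D, dense_in M W D /\
    forall D1, dense_in M W D1 -> forall t0 : {y | D1 y},
      exists code : Base M -> nat * {y | D1 y},
        forall d d', D d -> D d' -> code d = code d' -> d = d'.
Proof.
destruct (choice (fun (m : nat) (N : Base M -> Prop) => subset N W /\
    (forall s t, N s -> N t -> s <> t -> dist M s t >= (/2)^m) /\
    (forall w, W w -> exists s, N s /\ dist M w s < (/2)^m))) as [net Hnet].
{ intros m. apply separated_net, half_pow_pos. }
exists (fun d => exists m, net m d). split.
- split.
  + intros d [m Hd]. exact (proj1 (Hnet m) d Hd).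
  + intros w Ww eps Heps. destruct (half_pow_small eps Heps) as [m Hm].
    destruct (proj2 (proj2 (Hnet m)) w Ww) as [s [Ns ds]].
    exists s. split; [exists m; exact Ns|lra].
- intros D1 [_ D1dense] t0.
  destruct (choice_on (fun d => exists m, net m d)
    (fun d p => net (fst p) d /\ dist M d (proj1_sig (snd p)) < (/2)^(fst p) / 2) (O, t0))
    as [code Hcode].
  { intros d [m Nd]. pose proof (half_pow_pos m).
    destruct (D1dense d (proj1 (Hnet m) d Nd) ((/2)^m / 2)) as [t [D1t dt]]; [lra|].
    exists (m, exist _ t D1t). split; assumption. }
  exists code. intros d d' Hd Hd' E.
  destruct (Hcode d Hd) as [Nd dd]. destruct (Hcode d' Hd') as [Nd' dd'].
  rewrite E in Nd, dd. apply NNPP. intros ne.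
  pose proof (proj1 (proj2 (Hnet _)) d d' Nd Nd' ne).
  pose proof (dist_tri M d d' (proj1_sig (snd (code d')))).
  rewrite (dist_sym M (proj1_sig (snd (code d'))) d') in H0. lra.
Qed.

Definition isolated_in (W : Base M -> Prop) (y : Base M) : Prop :=
  exists r, r > 0 /\ forall z, W z -> dist M y z < r -> z = y.

Lemma dense_contains_isolated W D y : dense_in M W D -> W y -> isolated_in W y -> D y.
Proof.
intros [DW Ddense] Wy [r [rpos Hr]]. destruct (Ddense y Wy r rpos) as [d [Dd dy]].
rewrite <- (Hr d (DW d Dd) dy). exact Dd.
Qed.

Lemma dense_near_accumulation W D y : dense_in M W D -> ~ isolated_in W y ->
  forall r, r > 0 -> exists d, D d /\ 0 < dist M y d < r.
Proof.
intros [_ Ddense] acc r rpos.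
assert (exists z, W z /\ dist M y z < r / 2 /\ z <> y) as [z [Wz [dz ne]]].
{ apply NNPP. intros none. apply acc. exists (r / 2). split; [lra|].
  intros z Wz dz. apply NNPP. intros ne. apply none. exists z. auto. }
pose proof (dist_pos_neq y z (fun E => ne (eq_sym E))).
destruct (Ddense z Wz (dist M y z / 2)) as [d [Dd dd]]; [lra|].
exists d. split; [exact Dd|].
pose proof (dist_tri M y d z). pose proof (dist_tri M y z d) as Hyz.
rewrite (dist_sym M d z) in Hyz. split; lra.
Qed.

Lemma strictly_decreasing_injective (u : nat -> R) : (forall n, u (S n) < u n) -> Injective u.
Proof.
intros dec.
assert (lt : forall m n, (m < n)%nat -> u n < u m).
{ intros m n Hmn. induction Hmn as [|n _ IH]; [apply dec|pose proof (dec n); lra]. }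
intros m n E. destruct (Nat.lt_total m n) as [H|[H|H]]; [|exact H|]; apply lt in H; lra.
Qed.

Lemma dense_infinite W D y : dense_in M W D -> ~ isolated_in W y ->
  exists s : nat -> {d | D d}, Injective s.
Proof.
intros HD acc.
destruct (dependent_choice (fun _ d => D d /\ 0 < dist M y d)
  (fun _ d d' => dist M y d' < dist M y d)) as [s Hs].
- destruct (dense_near_accumulation W D y HD acc 1) as [d [Dd dd]]; [lra|].
  exists d. split; [exact Dd|lra].
- intros _ d [_ dpos].
  destruct (dense_near_accumulation W D y HD acc (dist M y d) dpos) as [d' [Dd' dd']].
  exists d'. split; [split; [exact Dd'|lra]|lra].
- exists (fun n => exist _ (s n) (proj1 (proj1 (Hs n)))).
  intros m n E. apply (f_equal (@proj1_sig _ _)) in E. simpl in E.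
  apply (strictly_decreasing_injective (fun n => dist M y (s n))).
  + intros k. exact (proj2 (Hs k)).
  + simpl. rewrite E. reflexivity.
Qed.

End MetricFacts.

Lemma surj_restriction_section {A B : Type} (f : A -> B) (S : A -> Prop) (T : B -> Prop) :
  surj_restriction f S T -> exists S0, subset S0 S /\ surj_restriction f S0 T /\
    forall x x', S0 x -> S0 x' -> f x = f x' -> x = x'.
Proof.
intros Hs.
destruct (choice (fun (y : {y | T y}) x => S x /\ f x = proj1_sig y)) as [g Hg].
{ intros [y Ty]. exact (Hs y Ty). }
exists (fun x => exists y, x = g y). split; [|split].
- intros x [y ->]. exact (proj1 (Hg y)).
- intros y Ty. exists (g (exist _ y Ty)). split; [eexists; reflexivity|exact (proj2 (Hg _))].
- intros x x' [y ->] [y' ->] E. rewrite (proj2 (Hg y)), (proj2 (Hg y')) in E.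
  rewrite (proj1_sig_inj _ y y' E). reflexivity.
Qed.

Lemma dens_le_image (X Y : Metric_Space) (f : Base X -> Base Y)
  (X0 : Base X -> Prop) (Y' : Base Y -> Prop) :
  continuous_map X Y f -> subset X0 (preimage f Y') -> surj_restriction f X0 Y' ->
  dens_le X Y X0 Y'.
Proof.
intros Hf HX0 Hs D1 [D1X0 D1dense]. exists (image f D1). split; [split|].
- intros y [d [Dd <-]]. exact (HX0 d (D1X0 d Dd)).
- intros w Yw eps Heps. destruct (Hs w Yw) as [x [X0x <-]].
  destruct (Hf x eps Heps) as [del [delpos Hdel]].
  destruct (D1dense x X0x del delpos) as [d [Dd dd]].
  exists (f d). split; [exists d; split; [exact Dd|reflexivity]|exact (Hdel d dd)].
- destruct (choice (fun (s : {y | image f D1 y}) (t : {x | D1 x}) =>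
    f (proj1_sig t) = proj1_sig s)) as [g Hg].
  { intros [y [d [Dd fd]]]. exists (exist _ d Dd). exact fd. }
  exists g. intros a b E. apply proj1_sig_inj. rewrite <- (Hg a), <- (Hg b), E. reflexivity.
Qed.

Section DiscreteCase.
Variables (X Y : Metric_Space) (Y' : Base Y -> Prop) (f : Base X -> Base Y).
Hypothesis f_cont : continuous_map X Y f.
Hypothesis Y'_discrete : forall y, Y' y -> isolated_in Y Y' y.
Variable X0 : Base X -> Prop.
Hypothesis X0_sub : subset X0 (preimage f Y').
Hypothesis f_inj : forall x x', X0 x -> X0 x' -> f x = f x' -> x = x'.

Lemma discrete_section_closed : rel_closed X (preimage f Y') X0.
Proof.
split; [exact X0_sub|]. intros x Hx Hclose.
destruct (Y'_discrete (f x) Hx) as [r [rpos Hr]].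
destruct (f_cont x r rpos) as [del [delpos Hdel]].
assert (same : forall z, X0 z -> dist X x z < del -> f z = f x).
{ intros z X0z dz. exact (Hr _ (X0_sub z X0z) (Hdel z dz)). }
destruct (Hclose del delpos) as [z0 [X0z0 dz0]].
replace x with z0; [exact X0z0|].
symmetry. apply eq_of_dist_lt. intros eps Heps.
destruct (Hclose (Rmin eps del)) as [z [X0z dz]]; [apply Rmin_pos; assumption|].
pose proof (Rmin_l eps del). pose proof (Rmin_r eps del).
assert (z = z0) as <-.
{ apply f_inj; [assumption|assumption|]. rewrite (same z X0z), (same z0 X0z0 dz0); [reflexivity|lra]. }
lra.
Qed.

Lemma discrete_section_dens_le : dens_le Y X Y' X0.
Proof.
intros D1 HD1. exists X0. split; [apply dense_in_self|].
assert (into : forall x, X0 x -> D1 (f x)).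
{ intros x X0x. apply (dense_contains_isolated Y Y' D1 _ HD1 (X0_sub x X0x)).
  exact (Y'_discrete _ (X0_sub x X0x)). }
exists (fun x => exist _ (f (proj1_sig x)) (into _ (proj2_sig x))).
intros a b E. apply (f_equal (@proj1_sig _ _)) in E. simpl in E.
apply proj1_sig_inj, f_inj; [exact (proj2_sig a)|exact (proj2_sig b)|exact E].
Qed.

End DiscreteCase.

(** * Lifting through a map that is open on [X'] *)

Lemma limit_in_fiber (X Y : Metric_Space) (f : Base X -> Base Y) (a : nat -> Base X) l y :
  continuous_map X Y f -> converges_to X a l ->
  (forall n, exists w, dist X (a n) w < (/2)^n /\ f w = y) -> f l = y.
Proof.
intros Hf Hl Ha. apply (eq_of_dist_lt Y). intros eps Heps.
destruct (Hf l eps Heps) as [del [delpos Hdel]].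
destruct (Hl (del / 2)) as [N1 HN1]; [lra|].
destruct (half_pow_small (del / 2)) as [N2 HN2]; [lra|].
destruct (Ha (Nat.max N1 N2)) as [w [dw <-]].
apply Hdel.
pose proof (HN1 _ (Nat.le_max_l N1 N2)) as Hl1. rewrite dist_sym in Hl1.
pose proof (half_pow_antitone N2 _ (Nat.le_max_r N1 N2)).
pose proof (dist_tri X l w (a (Nat.max N1 N2))). lra.
Qed.

Section Lift.
Variables (X Y : Metric_Space) (Y' : Base Y -> Prop) (f : Base X -> Base Y).
Hypothesis X_complete : complete X.
Hypothesis f_cont : continuous_map X Y f.
Hypothesis f_open : open_restriction X Y f (preimage f Y') Y'.
Hypothesis f_surj : surj_restriction f (preimage f Y') Y'.
Variable x0 : Base X.
Variable D : Base Y -> Prop.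
Hypothesis D_dense : dense_in Y Y' D.

Definition fiber_ball (z : Base X) (n : nat) : Base Y -> Prop :=
  image f (fun w => preimage f Y' w /\ dist X z w < (/2)^n).

Lemma fiber_ball_open z n : rel_open Y Y' (fiber_ball z n).
Proof.
apply f_open. split.
- intros w [Pw _]. exact Pw.
- intros w [Pw dw]. exists ((/2)^n - dist X z w). split; [lra|].
  intros x Px dx. split; [exact Px|]. pose proof (dist_tri X z x w). lra.
Qed.

Lemma fiber_ball_center z n : preimage f Y' z -> fiber_ball z n (f z).
Proof.
intros Pz. exists z. split; [|reflexivity]. split; [exact Pz|].
rewrite dist_self. apply half_pow_pos.
Qed.

(* A point of [Z] whose fiber ball at scale [n] covers [B(d, 2^-k)] in [Y'] (an arbitrary
   point if there is none).  Choosing only through indices in [D * nat] is what keeps the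
   tree of [node]s no larger than [D]. *)
Definition center (Z : Base X -> Prop) (n : nat) (d : Base Y) (k : nat) : Base X :=
  epsilon (inhabits x0)
    (fun z => Z z /\ forall y, Y' y -> dist Y d y < (/2)^k -> fiber_ball z n y).

Lemma center_spec Z n y z : Z z -> fiber_ball z n y ->
  exists d k, D d /\ Z (center Z n d k) /\ fiber_ball (center Z n d k) n y.
Proof.
intros Zz Vz. destruct (fiber_ball_open z n) as [Vsub Vopen].
destruct (Vopen y Vz) as [eps [epos Heps]].
destruct (half_pow_small (eps / 2)) as [k Hk]; [lra|].
assert (Yy : Y' y) by exact (Vsub y Vz).
destruct (proj2 D_dense y Yy ((/2)^k) (half_pow_pos k)) as [d [Dd dyd]].
exists d, k.
assert (Hc : Z (center Z n d k) /\
  forall y', Y' y' -> dist Y d y' < (/2)^k -> fiber_ball (center Z n d k) n y').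
{ unfold center. apply epsilon_spec. exists z. split; [exact Zz|]. intros y' Yy' dy'.
  apply Heps; [exact Yy'|]. pose proof (dist_tri Y y y' d). lra. }
split; [exact Dd|split; [exact (proj1 Hc)|]].
apply (proj2 Hc y Yy). rewrite dist_sym. exact dyd.
Qed.

Definition label := (Base Y * nat)%type.

(* [node (e :: q)] is chosen at scale [length q], inside the region of its parent [node q]:
   the ball of the parent's scale around it.  The root [nil] is a dummy whose region is the
   whole of [f^-1 Y']. *)
Definition region (q : list label) (p : Base X) : Base X -> Prop :=
  match q with
  | nil => preimage f Y'
  | _ :: q' => fun z => preimage f Y' z /\ dist X p z < (/2)^(length q')
  end.

Fixpoint node (q : list label) : Base X :=
  match q with
  | nil => x0
  | e :: q' => center (region q' (node q')) (length q') (fst e) (snd e)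
  end.

Definition tree_point (x : Base X) : Prop :=
  exists q, Forall (fun e => D (fst e)) q /\ preimage f Y' (node q) /\ node q = x.

Definition tracks (y : Base Y) (n : nat) (q : list label) : Prop :=
  length q = S n /\ Forall (fun e => D (fst e)) q /\ preimage f Y' (node q) /\
  fiber_ball (node q) n y.

Lemma tracks_start y : Y' y -> exists q, tracks y 0 q.
Proof.
intros Yy. destruct (f_surj y Yy) as [x [Px <-]].
destruct (center_spec (preimage f Y') 0 (f x) x Px (fiber_ball_center x 0 Px))
  as [d [k [Dd [Pc Vc]]]].
exists ((d, k) :: nil). split; [reflexivity|split; [repeat constructor; exact Dd|]].
split; [exact Pc|exact Vc].
Qed.

Lemma tracks_step y n q : tracks y n q ->
  exists q', tracks y (S n) q' /\ dist X (node q) (node q') < (/2)^n.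
Proof.
intros [Lq [Dq [Pq [w [[Pw dw] <-]]]]].
destruct q as [|e q0]; [discriminate|]. injection Lq as <-.
assert (Rw : region (e :: q0) (node (e :: q0)) w) by (split; assumption).
destruct (center_spec _ (length (e :: q0)) (f w) w Rw (fiber_ball_center w _ Pw))
  as [d [k [Dd [[Pc dc] Vc]]]].
exists ((d, k) :: e :: q0). split; [|exact dc].
split; [reflexivity|split; [constructor; assumption|split; [exact Pc|exact Vc]]].
Qed.

Lemma descent y : Y' y -> exists a : nat -> Base X,
  (forall n, tree_point (a n)) /\ (forall n, dist X (a n) (a (S n)) < (/2)^n) /\
  (forall n, fiber_ball (a n) n y).
Proof.
intros Yy.
destruct (dependent_choice (tracks y) (fun n q q' => dist X (node q) (node q') < (/2)^n)
  (tracks_start y Yy) (tracks_step y)) as [s Hs].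
exists (fun n => node (s n)).
split; [|split]; intros n; destruct (Hs n) as [[_ [Ds [Ps Vs]]] ds].
- exists (s n). split; [exact Ds|split; [exact Ps|reflexivity]].
- exact ds.
- exact Vs.
Qed.

Definition lift (x : Base X) : Prop :=
  preimage f Y' x /\ forall eps, eps > 0 -> exists z, tree_point z /\ dist X x z < eps.

Lemma lift_rel_closed : rel_closed X (preimage f Y') lift.
Proof.
split; [intros x [Px _]; exact Px|]. intros x Px Hx. split; [exact Px|]. intros eps Heps.
destruct (Hx (eps / 2)) as [z [[_ Hz] dz]]; [lra|].
destruct (Hz (eps / 2)) as [w [Tw dw]]; [lra|].
exists w. split; [exact Tw|]. pose proof (dist_tri X x w z). lra.
Qed.

Lemma tree_point_dense : dense_in X lift tree_point.
Proof.
split; [|intros w [_ Hw]; exact Hw].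
intros x Tx. split; [destruct Tx as [q [_ [Pq <-]]]; exact Pq|].
intros eps Heps. exists x. split; [exact Tx|]. rewrite dist_self. exact Heps.
Qed.

Lemma lift_surj : surj_restriction f lift Y'.
Proof.
intros y Yy. destruct (descent y Yy) as [a [Ta [da Va]]].
destruct (X_complete a (geometric_cauchy X a da)) as [l Hl].
assert (fl : f l = y).
{ apply (limit_in_fiber X Y f a l y f_cont Hl).
  intros n. destruct (Va n) as [w [[_ dw] fw]]. exists w. split; assumption. }
exists l. split; [|exact fl]. split.
- unfold preimage. rewrite fl. exact Yy.
- intros eps Heps. destruct (Hl eps Heps) as [N HN]. exists (a N). split; [exact (Ta N)|].
  rewrite dist_sym. apply HN. lia.
Qed.

Lemma tree_point_card (T : Type) (code : label -> T) (enc : list T -> T) :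
  (forall e e', D (fst e) -> D (fst e') -> code e = code e' -> e = e') -> Injective enc ->
  exists g : {x | tree_point x} -> T, Injective g.
Proof.
intros code_inj enc_inj.
destruct (choice (fun (x : {x | tree_point x}) q =>
  Forall (fun e => D (fst e)) q /\ node q = proj1_sig x)) as [path Hpath].
{ intros [x Tx]. simpl. destruct Tx as [q [Dq [_ Eq]]]. exists q. split; assumption. }
exists (fun x => enc (map code (path x))).
intros x x' E. apply enc_inj in E.
apply (map_inj_Forall _ code code_inj) in E; [|exact (proj1 (Hpath x))|exact (proj1 (Hpath x'))].
apply proj1_sig_inj. rewrite <- (proj2 (Hpath x)), <- (proj2 (Hpath x')), E. reflexivity.
Qed.

End Lift.

Lemma closed_lift_discrete (X Y : Metric_Space) (Y' : Base Y -> Prop) (f : Base X -> Base Y) :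
  continuous_map X Y f -> surj_restriction f (preimage f Y') Y' ->
  (forall y, Y' y -> isolated_in Y Y' y) ->
  exists X0, rel_closed X (preimage f Y') X0 /\ surj_restriction f X0 Y' /\ dens_eq X Y X0 Y'.
Proof.
intros Hf Hs Hdisc.
destruct (surj_restriction_section f _ _ Hs) as [X0 [X0_sub [X0_surj X0_inj]]].
exists X0. split; [|split; [exact X0_surj|split]].
- exact (discrete_section_closed X Y Y' f Hf Hdisc X0 X0_sub X0_inj).
- exact (dens_le_image X Y f X0 Y' Hf X0_sub X0_surj).
- exact (discrete_section_dens_le X Y Y' f Hdisc X0 X0_sub X0_inj).
Qed.

Lemma closed_lift_nondiscrete (X Y : Metric_Space) (Y' : Base Y -> Prop)
  (f : Base X -> Base Y) (y0 : Base Y) :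
  complete X -> continuous_map X Y f ->
  open_restriction X Y f (preimage f Y') Y' -> surj_restriction f (preimage f Y') Y' ->
  Y' y0 -> ~ isolated_in Y Y' y0 ->
  exists X0, rel_closed X (preimage f Y') X0 /\ surj_restriction f X0 Y' /\ dens_eq X Y X0 Y'.
Proof.
intros Hc Hf Ho Hs Yy0 acc.
destruct (Hs y0 Yy0) as [x0 _].
destruct (sigma_discrete_dense Y Y') as [D [HD Dcode]].
assert (X0_surj : surj_restriction f (lift X Y Y' f x0 D) Y')
  by exact (lift_surj X Y Y' f Hc Hf Ho Hs x0 D HD).
exists (lift X Y Y' f x0 D). split; [|split; [exact X0_surj|split]].
- apply lift_rel_closed.
- apply (dens_le_image X Y f _ Y' Hf); [intros x [Px _]; exact Px|exact X0_surj].
- intros D1 HD1. exists (tree_point X Y Y' f x0 D).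
  split; [apply tree_point_dense|].
  destruct (dense_infinite Y Y' D1 y0 HD1 acc) as [i i_inj].
  destruct (hessenberg _ i i_inj) as [h h_inj].
  destruct (list_injection i i_inj) as [enc enc_inj].
  destruct (Dcode D1 HD1 (i O)) as [code code_inj].
  apply (tree_point_card X Y Y' f x0 D _
    (fun e => h (h (i (fst (code (fst e))), snd (code (fst e))), i (snd e))) enc);
    [|exact enc_inj].
  intros [d k] [d' k'] Dd Dd' E. simpl in *.
  apply h_inj in E. injection E as E1 Ek. apply h_inj in E1. injection E1 as Em Et.
  apply i_inj in Ek as ->. apply i_inj in Em.
  rewrite (code_inj d d' Dd Dd'); [reflexivity|].
  destruct (code d), (code d'). simpl in *. congruence.
Qed.

Theorem theorem2p1 (X Y : Metric_Space) (Y' : Base Y -> Prop) (f : Base X -> Base Y) :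
  complete X ->
  continuous_map X Y f ->
  open_restriction X Y f (preimage f Y') Y' ->
  surj_restriction f (preimage f Y') Y' ->
  exists X0 : Base X -> Prop,
    rel_closed X (preimage f Y') X0 /\
    surj_restriction f X0 Y' /\
    dens_eq X Y X0 Y'.
Proof.
intros Hc Hf Ho Hs.
destruct (classic (forall y, Y' y -> isolated_in Y Y' y)) as [Hdisc|Hacc].
- exact (closed_lift_discrete X Y Y' f Hf Hs Hdisc).
- apply not_all_ex_not in Hacc as [y0 Hy0]. apply imply_to_and in Hy0 as [Yy0 acc].
  exact (closed_lift_nondiscrete X Y Y' f y0 Hc Hf Ho Hs Yy0 acc).
Qed.
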